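(* Let $\mathcal{L}$ be a language with semantic structure $\mathcal{S}=(\Sigma,I)$, with atom interpretations $\mathbf{AP}_{\mathcal{L}}=\{\mathbf{p}\mid p\in AP_{\mathcal{L}}\}$ and operator interpretations $\mathbf{Op}_{\mathcal{L}}=\{\mathbf{f}\mid f\in Op_{\mathcal{L}}\}$. If $\mathcal{L}$ is closed under infinite logical conjunction, then $\mathrm{AD}_{\mathcal{L}}=\mathcal{S}_{\mathbf{AP}_{\mathcal{L}}\cup\mathbf{Op}_{\mathcal{L}}}(\{\Sigma\})$, where each $\mathbf{p}$ is regarded as a $0$-ary function (a constant) and $\{\Sigma\}$ denotes the most abstract domain (the closure mapping every subset to $\Sigma$).
   Context: A language $\mathcal{L}$ has formulae $\varphi::=p\mid f(\varphi_1,\dots,\varphi_n)$, $p\in AP_{\mathcal{L}}$, $f\in Op_{\mathcal{L}}$ of arity $\ge1$; $\mathcal{S}=(\Sigma,I)$ gives $\mathbf{p}=I(p)\subseteq\Sigma$, $\mathbf{f}=I(f):\wp(\Sigma)^n\to\wp(\Sigma)$ and the compositional semantics $[\![\varphi]\!]_{\mathcal{S}}$. Closed under infinite logical conjunction: for every $\Phi\subseteq\mathcal{L}$ (including $\varnothing$) some $\psi$ has $[\![\psi]\!]_{\mathcal{S}}=\bigcap_{\varphi\in\Phi}[\![\varphi]\!]_{\mathcal{S}}$. $\mathrm{AD}_{\mathcal{L}}$ is the upper closure operator on $\wp(\Sigma)$ whose image is the set of intersections of subfamilies of $\{[\![\varphi]\!]_{\mathcal{S}}\}$. Abstract domains of $\wp(\Sigma)$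 are identified with upper closure operators and ordered pointwise. A closure $\rho$ is forward complete for $f$ of arity $n\ge1$ if $f(\rho(X_1),..,\rho(X_n))=\rho(f(\rho(X_1),..,\rho(X_n)))$, and for a constant $k\subseteq\Sigma$ if $\rho(k)=k$. For a set $F$ of such functions and a closure $\mu$, $\mathcal{S}_F(\mu)$ is the most abstract closure $\rho\sqsubseteq\mu$ that is forward complete for all $f\in F$. *)

From mathcomp Require Import all_boot.
Set Implicit Arguments.
Unset Strict Implicit.
Unset Printing Implicit Defensive.

Definition pset (S : Type) := S -> Prop.
Definition psubset S (X Y : pset S) := forall s, X s -> Y s.
Definition pfull {S : Type} : pset S := fun _ => True.

Record language := Language {
  AP : Type;
  Op : Type;
  arity : Op -> nat;
  arity_pos : forall f, 0 < arity f }.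

Inductive formula (L : language) : Type :=
| Atom : AP L -> formula L
| App : forall f : Op L, ('I_(arity f) -> formula L) -> formula L.

Record sem_structure (L : language) := SemStructure {
  Sigma : Type;
  Iap : AP L -> pset Sigma;
  Iop : forall f : Op L, ('I_(arity f) -> pset Sigma) -> pset Sigma }.

Fixpoint sem {L : language} (S : sem_structure L) (phi : formula L) : pset (Sigma S) :=
  match phi with
  | Atom p => @Iap L S p
  | App f args => @Iop L S f (fun i => @sem L S (args i))
  end.
Arguments sem {L} S phi _.
Arguments Iap {L} s _ _.
Arguments Iop {L} s f _ _.
Arguments Sigma {L} s.

Definition closed_inf_conj (L : language) (S : sem_structure L) : Prop :=
  forall Phi : pset (formula L), exists psi : formula L,
    sem S psi = (fun s => forall phi, Phi phi -> sem S phi s).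

Definition uco {T : Type} (rho : pset T -> pset T) : Prop :=
  [/\ (forall X Y, psubset X Y -> psubset (rho X) (rho Y)),
      (forall X, psubset X (rho X)) &
      (forall X, rho (rho X) = rho X)].

Definition uco_le {T : Type} (rho mu : pset T -> pset T) : Prop :=
  forall X, psubset (rho X) (mu X).

Definition top_uco {T : Type} : pset T -> pset T := fun _ => @pfull T.

Definition is_AD (L : language) (S : sem_structure L)
    (rho : pset (Sigma S) -> pset (Sigma S)) : Prop :=
  uco rho /\
  forall Y : pset (Sigma S),
    (exists X, rho X = Y) <->
    (exists Phi : pset (formula L),
        Y = (fun s => forall phi, Phi phi -> sem S phi s)).

Definition fc_fun (T : Type) (n : nat) (g : ('I_n -> pset T) -> pset T)
    (rho : pset T -> pset T) : Prop :=
  forall Xs : 'I_n -> pset T,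
    g (fun i => rho (Xs i)) = rho (g (fun i => rho (Xs i))).

Definition fc_const (T : Type) (k : pset T) (rho : pset T -> pset T) : Prop :=
  rho k = k.

Definition fc_AP_Op (L : language) (S : sem_structure L)
    (rho : pset (Sigma S) -> pset (Sigma S)) : Prop :=
  (forall p : AP L, fc_const (Iap S p) rho) /\
  (forall f : Op L, fc_fun (Iop S f) rho).

(* rho = S_F(mu): rho is the most abstract uco below mu that is forward
   complete for F (here F given as a predicate on closures). *)
Definition is_S_F (T : Type) (fcF : (pset T -> pset T) -> Prop)
    (mu rho : pset T -> pset T) : Prop :=
  [/\ uco rho, uco_le rho mu, fcF rho &
      forall rho', uco rho' -> uco_le rho' mu -> fcF rho' -> uco_le rho' rho].

Arguments closed_inf_conj {L} S.
Arguments is_AD {L} S rho.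
Arguments fc_AP_Op {L} S rho.
Arguments is_S_F {T} fcF mu rho.

(* The image of AD_L consists of intersections of formula denotations, which
   under closure by infinite conjunction are themselves denotations [[psi]].
   Forward completeness for the atoms (as constants) and for the operators
   says, by structural induction, that a closure fixes every [[phi]]; AD_L
   does so, and any closure fixing AD_L's image lies below AD_L. *)
From mathcomp Require Import all_boot.
From Stdlib Require Import FunctionalExtensionality PropExtensionality.
From Stdlib Require Import IndefiniteDescription.
Set Implicit Arguments.
Unset Strict Implicit.
Unset Printing Implicit Defensive.

Lemma pset_ext (T : Type) (X Y : pset T) : (forall s, X s <-> Y s) -> X = Y.
Proof.
by move=> XY; apply: functional_extensionality => s; apply: propositional_extensionality.
Qed.

Lemma uco_sub_fixed (T : Type) (rho : pset T -> pset T) (X Y : pset T) :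
  uco rho -> rho Y = Y -> psubset X Y -> psubset (rho X) Y.
Proof. by case=> mono _ _ fixY XY; rewrite -fixY; apply: mono. Qed.

Section AbstractDomain.

Variables (L : language) (S : sem_structure L).

Definition meet_sem (Phi : pset (formula L)) : pset (Sigma S) :=
  fun s => forall phi, Phi phi -> sem S phi s.

Definition ad_closure (X : pset (Sigma S)) : pset (Sigma S) :=
  meet_sem (fun phi => psubset X (sem S phi)).

Lemma ad_closure_ext X : psubset X (ad_closure X).
Proof. by move=> s Xs phi; apply. Qed.

Lemma ad_closure_meet_sem Phi : ad_closure (meet_sem Phi) = meet_sem Phi.
Proof.
apply: pset_ext => s; split; last exact: ad_closure_ext.
by move=> Hs phi Phi_phi; apply: Hs => t; apply.
Qed.

Lemma ad_closure_uco : uco ad_closure.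
Proof.
split; first by move=> X Y XY s Hs phi Yphi; apply: Hs => t /XY /Yphi.
  exact: ad_closure_ext.
by move=> X; apply: ad_closure_meet_sem.
Qed.

Lemma ad_closure_is_AD : is_AD S ad_closure.
Proof.
split; first exact: ad_closure_uco.
move=> Y; split; first by case=> X <-; eexists.
by case=> Phi ->; exists (meet_sem Phi); apply: ad_closure_meet_sem.
Qed.

Lemma is_AD_sem_fixed rho phi : is_AD S rho -> rho (sem S phi) = sem S phi.
Proof.
case=> -[_ _ idem] img.
have [X <-] : exists X, rho X = sem S phi.
  apply/img; exists (eq^~ phi).
  by apply: pset_ext => s; split => [Hs _ ->|]; last apply.
exact: idem.
Qed.

Lemma is_AD_image_sem rho X :
  closed_inf_conj S -> is_AD S rho -> exists psi, rho X = sem S psi.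
Proof.
move=> conj [_ img]; have [Phi ->] := (img (rho X)).1 (ex_intro _ X erefl).
by have [psi <-] := conj Phi; exists psi.
Qed.

Lemma is_AD_fc_AP_Op rho : closed_inf_conj S -> is_AD S rho -> fc_AP_Op S rho.
Proof.
move=> conj ADrho; split=> [p | f Xs]; first exact: (is_AD_sem_fixed (Atom p)).
have /functional_choice [psi rhoXs] : forall i, exists psi, rho (Xs i) = sem S psi.
  by move=> i; apply: is_AD_image_sem.
have -> : (fun i => rho (Xs i)) = (fun i => sem S (psi i)).
  by apply: functional_extensionality.
by rewrite (is_AD_sem_fixed (App psi)).
Qed.

Lemma fc_AP_Op_sem_fixed rho phi : fc_AP_Op S rho -> rho (sem S phi) = sem S phi.
Proof.
case=> fc_atom fc_op; elim: phi => [p | f args IH] /=; first exact: fc_atom.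
have -> : (fun i => sem S (args i)) = (fun i => rho (sem S (args i))).
  by apply: functional_extensionality => i; rewrite IH.
by rewrite -fc_op.
Qed.

Lemma fc_AP_Op_uco_le_AD rho rho' : closed_inf_conj S -> is_AD S rho ->
  uco rho' -> fc_AP_Op S rho' -> uco_le rho' rho.
Proof.
move=> conj ADrho uco_rho' fc_rho' X.
have [psi rhoX] := is_AD_image_sem X conj ADrho.
apply: uco_sub_fixed => //; rewrite rhoX; first exact: fc_AP_Op_sem_fixed.
by rewrite -rhoX; case: ADrho.1.
Qed.

End AbstractDomain.

Theorem corollary6p6 (L : language) (S : sem_structure L) :
  closed_inf_conj S ->
  (exists rho, is_AD S rho) /\
  (forall rho, is_AD S rho -> is_S_F (fc_AP_Op S) (@top_uco (Sigma S)) rho).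
Proof.
move=> conj; split; first by eexists; apply: ad_closure_is_AD.
move=> rho ADrho; split=> //; first exact: ADrho.1.
- exact: is_AD_fc_AP_Op.
- by move=> rho' uco_rho' _; apply: fc_AP_Op_uco_le_AD.
Qed.
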